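(* Let $G=(S,T,\pi)$ be a two-person win-lose game, with representing matrix $M_G=(\pi(s,t))_{s\in S,t\in T}$. Assume $M_G$ satisfies at least one of: (1) all but finitely many rows contain finitely many $0$ entries; (2) there is a finite $N$ such that all but finitely many rows contain at most $N$ entries equal to $1$; (3) there is a finite $N$ such that all but finitely many columns contain at most $N$ entries equal to $0$; (4) all but finitely many columns contain finitely many $1$ entries. Then $G$ is totally minimax.
   Context: A two-person win-lose game is $G=(S,T,\pi)$ with non-empty sets $S,T$ (arbitrary cardinality) and $\pi:S\times T\to\{0,1\}$; rows of $M_G$ are indexed by $S$ and columns by $T$. $\Delta(X)$ is the set of probability distributions on $X$ with at most countable support; $\pi^{\mathrm{mix}}(\mathbf{p},\mathbf{q})=\sum p_sq_t\pi(s,t)$. A game has the minimax property if $\sup_{\mathbf{p}\in\Delta(S)}\inf_{\mathbf{q}\in\Delta(T)}\pi^{\mathrm{mix}}(\mathbf{p},\mathbf{q})=\inf_{\mathbf{q}\in\Delta(T)}\sup_{\mathbf{p}\in\Delta(S)}\pi^{\mathrm{mix}}(\mathbf{p},\mathbf{q})$. $G$ is totally minimax if every subgame $(S',T',\pi|_{S'\times T'})$ with non-empty $S'\subseteq S$, $T'\subseteq T$ has the minimax property. *)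

From HB Require Import structures.
From mathcomp Require Import all_boot all_order all_algebra.
From mathcomp Require Import all_classical all_reals all_analysis.
Set Implicit Arguments. Unset Strict Implicit. Unset Printing Implicit Defensive.
Import Order.TTheory GRing.Theory Num.Theory.
Local Open Scope classical_set_scope.
Local Open Scope ring_scope.

(* A win-lose game (S,T,pi) is given by pi : S -> T -> bool. *)
Definition is_mixed (R : realType) (X : choiceType) (A : set X) (p : X -> R) : Prop :=
  [/\ (forall x, 0 <= p x),
      (forall x, p x != 0 -> A x),
      countable [set x | p x != 0] &
      (\esum_(x in [set: X]) (p x)%:E = 1)%E].

Definition mixpay (R : realType) (S T : choiceType) (pi : S -> T -> bool)
  (p : S -> R) (q : T -> R) : \bar R :=
  \esum_(st in [set: S * T]) (p st.1 * q st.2 * (pi st.1 st.2)%:R)%:E.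

Definition minimax_on (R : realType) (S T : choiceType) (pi : S -> T -> bool)
  (A : set S) (B : set T) : Prop :=
  ereal_sup [set ereal_inf [set mixpay pi p q | q in [set q : T -> R | is_mixed B q]]
            | p in [set p : S -> R | is_mixed A p]]
  = ereal_inf [set ereal_sup [set mixpay pi p q | p in [set p : S -> R | is_mixed A p]]
            | q in [set q : T -> R | is_mixed B q]].

Definition totally_minimax (R : realType) (S T : choiceType) (pi : S -> T -> bool) : Prop :=
  forall (A : set S) (B : set T), A !=set0 -> B !=set0 -> minimax_on R pi A B.

(* Games whose rows fall into finitely many types (rows agreeing on every column)
   are minimax: let the row player run regret matching over the types against
   approximate best replies of the column player.  Blackwell's condition makes the
   squared positive regrets grow at most linearly, so the average regret vanishes
   and the averaged strategies of both players are near-optimal.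
   Under (4), keep only the 1s of the game lying in a finite set of rows or in the
   finitely many exceptional columns: the truncated game has finitely many row
   types and a smaller lower value.  Iterate, adding to the finite set the finitely
   many rows with a 1 in the support of the last column strategy: every row is
   wronged in at most one round, so the average of K rounds is within 1/K of the
   lower value.  Under (3), fill in 1s instead and add the support of the last row
   strategy: a column loses in a round only through a new row with a 0 in it,
   which happens at most N times.  Cases (1) and (2) are (4) and (3) for the
   transposed game with 0s and 1s exchanged.  Finally, finitely supported mixed
   strategies already determine both values of the game. *)

From HB Require Import structures.
From mathcomp Require Import all_boot all_order all_algebra.
From mathcomp Require Import all_classical all_reals all_analysis.
From mathcomp Require Import ring lra.
Set Implicit Arguments. Unset Strict Implicit. Unset Printing Implicit Defensive.
Import Order.TTheory GRing.Theory Num.Theory.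
Local Open Scope classical_set_scope.
Local Open Scope ring_scope.

Section RegretMatching.
Variables (R : realFieldType) (n : nat).

Definition pospart (x : R) := Num.max x 0.
Definition pospart_mass (a : nat -> R) := \sum_(i < n) pospart (a i).
Definition regret_matching (a : nat -> R) (i : nat) : R :=
  if 0 < pospart_mass a then pospart (a i) / pospart_mass a else n%:R^-1.
Definition wavg (w u : nat -> R) := \sum_(i < n) w i * u i.

Lemma pospart_ge0 x : 0 <= pospart x.
Proof. by rewrite /pospart le_max lexx orbT. Qed.

Lemma le_pospart x : x <= pospart x.
Proof. by rewrite /pospart le_max lexx. Qed.

Lemma pospartD_sqr a r : pospart (a + r) ^+ 2 <= (pospart a + r) ^+ 2.
Proof.
rewrite /pospart !maxEle; case: ifP => h1; case: ifP => h2;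
  rewrite ?expr0n ?sqr_ge0 //.
have h1' : 0 < a + r by rewrite ltNge h1.
nra.
Qed.

Lemma pospart_mass_ge0 a : 0 <= pospart_mass a.
Proof. by apply: sumr_ge0 => i _; exact: pospart_ge0. Qed.

Lemma regret_matching_ge0 a i : 0 <= regret_matching a i.
Proof.
rewrite /regret_matching; case: ifP => h; last by rewrite invr_ge0 ler0n.
by rewrite divr_ge0 // ?pospart_ge0 // ltW.
Qed.

Hypothesis n_gt0 : (0 < n)%N.

Lemma regret_matching_sum1 a : \sum_(i < n) regret_matching a i = 1.
Proof.
have [h|h] := boolP (0 < pospart_mass a).
  under eq_bigr do rewrite /regret_matching h.
  by rewrite -mulr_suml divff // gt_eqF.
under eq_bigr do rewrite /regret_matching (negbTE h).
by rewrite sumr_const card_ord -[X in X = 1]mulr_natr mulVf // pnatr_eq0 -lt0n.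
Qed.

Lemma wavg_regret_matching_01 (a u : nat -> R) :
  (forall i, 0 <= u i <= 1) -> 0 <= wavg (regret_matching a) u <= 1.
Proof.
move=> u01; apply/andP; split.
  apply: sumr_ge0 => i _; apply: mulr_ge0; first exact: regret_matching_ge0.
  by case/andP: (u01 i).
rewrite -(regret_matching_sum1 a) /wavg; apply: ler_sum => i _.
rewrite -[leRHS]mulr1; apply: ler_wpM2l; first exact: regret_matching_ge0.
by case/andP: (u01 i).
Qed.

Lemma pospart_mass_eq0 a i : pospart_mass a = 0 -> (i < n)%N -> pospart (a i) = 0.
Proof.
move=> /eqP; rewrite psumr_eq0 => [/allP h lt_in|j _]; last exact: pospart_ge0.
exact/eqP/(h (Ordinal lt_in) (mem_index_enum _)).
Qed.

(* Blackwell's condition: the payoff excess over the weighted average is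
   orthogonal to the positive part of the regret that produced the weights. *)
Lemma pospart_regret_orth (a u : nat -> R) :
  \sum_(i < n) pospart (a i) * (u i - wavg (regret_matching a) u) = 0.
Proof.
under eq_bigr do rewrite mulrBr.
rewrite sumrB -mulr_suml -/(pospart_mass a) /wavg.
have [h|h] := boolP (0 < pospart_mass a).
  have -> : \sum_(i < n) regret_matching a i * u i =
            (\sum_(i < n) pospart (a i) * u i) / pospart_mass a.
    by rewrite mulr_suml; apply: eq_bigr => i _; rewrite /regret_matching h mulrAC.
  by rewrite mulrC divfK ?subrr // gt_eqF.
have m0 : pospart_mass a = 0.
  by apply/eqP; rewrite eq_le pospart_mass_ge0 andbT leNgt.
rewrite m0 mul0r subr0; apply: big1 => i _.
by rewrite pospart_mass_eq0 ?mul0r.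
Qed.

(* The environment answers the weights [w] with the payoff vector [adv w];
   [regret k i] is the regret for not having played [i] in rounds [0 .. k-1]. *)
Variable adv : (nat -> R) -> nat -> R.
Hypothesis adv01 : forall w i, 0 <= adv w i <= 1.

Fixpoint regret k : nat -> R :=
  if k is k'.+1 then
    let w := regret_matching (regret k') in
    fun i => regret k' i + adv w i - wavg w (adv w)
  else fun _ => 0.

Definition round_weights k := regret_matching (regret k).
Definition round_payoff k := adv (round_weights k).

Lemma regretE k i :
  regret k i = \sum_(j < k) (round_payoff j i - wavg (round_weights j) (round_payoff j)).
Proof.
elim: k => [|k IH] /=; first by rewrite big_ord0.
by rewrite big_ord_recr /= -IH addrA.
Qed.

Lemma sum_pospart_regret_sqr k :
  \sum_(i < n) pospart (regret k i) ^+ 2 <= n%:R * k%:R.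
Proof.
elim: k => [|k IH] /=.
  by rewrite mulr0 big1 // => i _; rewrite /pospart maxxx expr0n.
set w := regret_matching (regret k); set u := adv w; set d := wavg w u.
have u01 i : 0 <= u i <= 1 by exact: adv01.
have /andP[d0 d1] : 0 <= d <= 1 by exact: wavg_regret_matching_01.
apply: (@le_trans _ _ (\sum_(i < n) (pospart (regret k i) + (u i - d)) ^+ 2)).
  by apply: ler_sum => i _; rewrite -addrA; exact: pospartD_sqr.
under eq_bigr do rewrite sqrrD.
rewrite big_split big_split /= sumrMnl pospart_regret_orth mul0rn addr0.
have step : \sum_(i < n) (u i - d) ^+ 2 <= n%:R.
  rewrite -[in leRHS](card_ord n) -sumr_const; apply: ler_sum => i _.
  have /andP[? ?] := u01 i; nra.
by rewrite [k.+1%:R]mulrS mulrDr mulr1 addrC lerD.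
Qed.

Lemma regret_le k i (eta : R) : (i < n)%N -> 0 < eta -> n%:R <= eta ^+ 2 * k%:R ->
  \sum_(j < k) round_payoff j i - \sum_(j < k) wavg (round_weights j) (round_payoff j)
    <= eta * k%:R.
Proof.
move=> lt_in eta0 hk; rewrite -sumrB -regretE.
apply: le_trans (le_pospart _) _.
have ek : 0 <= eta * k%:R by rewrite mulr_ge0 // ltW.
rewrite -(ler_pXn2r (_ : (0 < 2)%N)) ?nnegrE ?pospart_ge0 //.
apply: (le_trans _ (_ : n%:R * k%:R <= _)).
  apply: le_trans (sum_pospart_regret_sqr k).
  rewrite (bigD1 (Ordinal lt_in)) //= lerDl.
  by apply: sumr_ge0 => j _; exact: sqr_ge0.
by rewrite exprMn expr2 mulrA ler_wpM2r.
Qed.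

End RegretMatching.

Section FiniteMixtures.
Variable R : realFieldType.

(* A finitely supported mixed strategy is a list of (weight, strategy) pairs. *)
Definition weight (Z : Type) (zs : seq (R * Z)) := \sum_(p <- zs) p.1.
Definition fmixed (Z : eqType) (C : set Z) (zs : seq (R * Z)) :=
  (forall p, p \in zs -> 0 <= p.1 /\ C p.2) /\ weight zs = 1.

Definition pure_mix (Z : Type) (z : Z) : seq (R * Z) := [:: (1, z)].
Definition avg_mix (Z : Type) (k : nat) (f : nat -> seq (R * Z)) :=
  flatten [seq [seq (k%:R^-1 * p.1, p.2) | p <- f j] | j <- iota 0 k].

Lemma fmixed_pure (Z : eqType) (C : set Z) z : C z -> fmixed C (pure_mix z).
Proof.
move=> Cz; split; last by rewrite /weight big_seq1.
by move=> p; rewrite inE => /eqP ->.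
Qed.

Lemma sum_avg_mix (Z : Type) k (f : nat -> seq (R * Z)) (G : Z -> R) :
  \sum_(p <- avg_mix k f) p.1 * G p.2 =
  k%:R^-1 * \sum_(j < k) \sum_(p <- f j) p.1 * G p.2.
Proof.
rewrite /avg_mix big_flatten /= big_map.
rewrite -{1}(subn0 k) -/(index_iota 0 k) big_mkord mulr_sumr; apply: eq_bigr => j _.
by rewrite big_map mulr_sumr; apply: eq_bigr => p _; rewrite mulrA.
Qed.

Lemma fmixed_avg (Z : eqType) (C : set Z) k (f : nat -> seq (R * Z)) :
  (0 < k)%N -> (forall j, fmixed C (f j)) -> fmixed C (avg_mix k f).
Proof.
move=> k0 fC; split.
  move=> p /flattenP [zs /mapP [j _ ->]] /mapP [q qin ->] /=.
  have [/(_ q qin) [q0 Cq] _] := fC j.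
  by rewrite mulr_ge0 // invr_ge0 ler0n.
have w1 j : weight (f j) = 1 by case: (fC j).
have := sum_avg_mix k f (fun _ => 1); rewrite /weight.
under eq_bigr do rewrite mulr1.
under [in RHS]eq_bigr do under eq_bigr do rewrite mulr1.
move=> ->; rewrite (eq_bigr (fun=> 1)) => [|j _]; last exact: w1.
by rewrite sumr_const card_ord -[X in _ * X]mulr_natr mul1r mulVf // pnatr_eq0 -lt0n.
Qed.

Variables (X Y : eqType) (g : X -> Y -> bool).

Definition rowpay (xs : seq (R * X)) y := \sum_(p <- xs) p.1 * (g p.2 y)%:R.
Definition colpay x (ys : seq (R * Y)) := \sum_(p <- ys) p.1 * (g x p.2)%:R.

Lemma rowpay_avg k f y : rowpay (avg_mix k f) y = k%:R^-1 * \sum_(j < k) rowpay (f j) y.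
Proof. exact: (sum_avg_mix k f (fun x => (g x y)%:R)). Qed.

Lemma colpay_avg x k f : colpay x (avg_mix k f) = k%:R^-1 * \sum_(j < k) colpay x (f j).
Proof. exact: (sum_avg_mix k f (fun y => (g x y)%:R)). Qed.

Lemma colpay_pure x y : colpay x (pure_mix y) = (g x y)%:R.
Proof. by rewrite /colpay big_seq1 mul1r. Qed.

Variables (A : set X) (B : set Y).

Lemma rowpay_ge0 xs y : fmixed A xs -> 0 <= rowpay xs y.
Proof.
move=> [xs0 _]; rewrite /rowpay big_seq; apply: sumr_ge0 => p pin.
by rewrite mulr_ge0 ?ler0n //; case: (xs0 p pin).
Qed.

Lemma rowpay_le1 xs y : fmixed A xs -> rowpay xs y <= 1.
Proof.
move=> [xs0 <-]; rewrite /rowpay /weight !big_seq; apply: ler_sum => p pin.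
rewrite -[leRHS]mulr1 ler_wpM2l ?lern1 ?leq_b1 //; by case: (xs0 p pin).
Qed.

Lemma colpay_ge0 x ys : fmixed B ys -> 0 <= colpay x ys.
Proof.
move=> [ys0 _]; rewrite /colpay big_seq; apply: sumr_ge0 => p pin.
by rewrite mulr_ge0 ?ler0n //; case: (ys0 p pin).
Qed.

Lemma colpay_le1 x ys : fmixed B ys -> colpay x ys <= 1.
Proof.
move=> [ys0 <-]; rewrite /colpay /weight !big_seq; apply: ler_sum => p pin.
rewrite -[leRHS]mulr1 ler_wpM2l ?lern1 ?leq_b1 //; by case: (ys0 p pin).
Qed.

(* [lower_le c] says that the lower value of the game restricted to [A] x [B],
   computed with finitely supported mixed strategies, is at most [c]; the other
   three are read likewise. *)
Definition lower_le c := forall xs, fmixed A xs -> forall d, 0 < d ->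
  exists2 y, B y & rowpay xs y <= c + d.
Definition upper_ge c := forall ys, fmixed B ys -> forall d, 0 < d ->
  exists2 x, A x & c - d <= colpay x ys.
Definition upper_le c := forall e, 0 < e ->
  exists2 ys, fmixed B ys & forall x, A x -> colpay x ys <= c + e.
Definition lower_ge c := forall e, 0 < e ->
  exists2 xs, fmixed A xs & forall y, B y -> c - e <= rowpay xs y.

End FiniteMixtures.
Arguments pure_mix {R Z} z.
Arguments fmixed_pure {R Z C z}.

Section Monotonicity.
Variables (R : realFieldType) (X Y : eqType) (g h : X -> Y -> bool).
Variables (A : set X) (B : set Y).
Hypothesis le_gh : forall x y, A x -> B y -> g x y -> h x y.

Lemma lower_le_mono (c : R) : lower_le h A B c -> lower_le g A B c.
Proof.
move=> hc xs xsA d d0; have [y By hy] := hc xs xsA d d0.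
exists y => //; apply: le_trans hy; rewrite /rowpay !big_seq.
apply: ler_sum => p pin; have [/(_ p pin) [p0 Ap] _] := xsA.
by rewrite ler_wpM2l // ler_nat; case: (g _ _) (le_gh Ap By) => // ->.
Qed.

Lemma upper_ge_mono (c : R) : upper_ge g A B c -> upper_ge h A B c.
Proof.
move=> hc ys ysB d d0; have [x Ax hx] := hc ys ysB d d0.
exists x => //; apply: le_trans hx _; rewrite /colpay !big_seq.
apply: ler_sum => p pin; have [/(_ p pin) [p0 Bp] _] := ysB.
by rewrite ler_wpM2l // ler_nat; case: (g _ _) (le_gh Ax Bp) => // ->.
Qed.

End Monotonicity.

Lemma exists_nat_gt (R : archiRealDomainType) (x : R) :
  exists2 k : nat, (0 < k)%N & x < k%:R.
Proof.
exists (Num.Def.archi_bound `|x|).+1 => //.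
apply: le_lt_trans (ler_norm x) _; apply: lt_le_trans (archi_boundP (normr_ge0 x)) _.
by rewrite ler_nat.
Qed.

Lemma approx_argmin (R : realType) (Y : Type) (B : set Y) (f : Y -> R) (m d : R) :
  B !=set0 -> 0 < d -> (forall y, B y -> m <= f y) ->
  exists2 y, B y & forall y', B y' -> f y <= f y' + d.
Proof.
move=> [y0 By0] d0 fm; set E := f @` B.
have hE : has_inf E by split; [exists (f y0), y0 | exists m => _ [y By <-]; exact: fm].
have [_ [y By <-] hy] := inf_adherent d0 hE.
exists y => // y' By'; apply: le_trans (ltW hy) _.
by rewrite lerD2r; apply: ge_inf; [case: hE | exists y'].
Qed.

Section FiniteRowTypes.
Variables (R : realType) (X Y : eqType) (g : X -> Y -> bool).
Variables (A : set X) (B : set Y).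

Definition row_types (rs : seq X) := (forall r, r \in rs -> A r) /\
  forall x, A x -> exists2 r, r \in rs & forall y, B y -> g x y = g r y.

Variables (rs : seq X) (x0 : X).
Hypotheses (rsT : row_types rs) (Ax0 : A x0) (B0 : B !=set0).

Definition type_mix (w : nat -> R) := [seq (w i, nth x0 rs i) | i <- iota 0 (size rs)].

Lemma rowpay_type_mix (w : nat -> R) y :
  rowpay g (type_mix w) y = wavg (size rs) w (fun i => (g (nth x0 rs i) y)%:R).
Proof. by rewrite /rowpay big_map -{1}(subn0 (size rs)) -/(index_iota 0 _) big_mkord. Qed.

Lemma fmixed_type_mix (w : nat -> R) :
  (forall i, 0 <= w i) -> \sum_(i < size rs) w i = 1 -> fmixed A (type_mix w).
Proof.
move=> w0 w1; split=> [p /mapP [i]|].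
  by rewrite mem_iota add0n => /andP[_ lt_i] -> /=; split; last exact/rsT.1/mem_nth.
by rewrite /weight big_map -{1}(subn0 (size rs)) -/(index_iota 0 _) big_mkord.
Qed.

Lemma size_row_types_gt0 : (0 < size rs)%N.
Proof. by have [r] := rsT.2 x0 Ax0; case: rs. Qed.

Lemma regret_matching_dynamics d eta : 0 < d -> 0 < eta ->
  exists k (y : nat -> Y) (w : nat -> nat -> R), [/\ (0 < k)%N,
    forall j, B (y j),
    forall j y', B y' ->
      rowpay g (type_mix (w j)) (y j) <= rowpay g (type_mix (w j)) y' + d,
    forall j, fmixed A (type_mix (w j)) &
    forall r, r \in rs -> \sum_(j < k) (g r (y j))%:R
      - \sum_(j < k) rowpay g (type_mix (w j)) (y j) <= eta * k%:R].
Proof.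
move=> d0 eta0.
have /choice [br brP] : forall w, exists y, B y /\ forall y', B y' ->
    rowpay g (type_mix w) y <= rowpay g (type_mix w) y' + d.
  move=> w.
  have [|y By ybr] := approx_argmin (f := rowpay g (type_mix w))
    (m := - \sum_(i < size rs) `|w i|) B0 d0.
    move=> y _; rewrite rowpay_type_mix -sumrN; apply: ler_sum => i _.
    case: (g _ _); rewrite ?mulr1 ?mulr0 ?oppr_le0 //.
    by rewrite lerNl -normrN ler_norm.
  by exists y.
pose adv w i : R := (g (nth x0 rs i) (br w))%:R.
have adv01 w i : 0 <= adv w i <= 1 by rewrite ler0n lern1 leq_b1.
have [k k0 hk] := exists_nat_gt ((size rs)%:R / eta ^+ 2).
pose w := round_weights (size rs) adv.
exists k, (fun j => br (w j)), w; split => // [j|j|j|r rin].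
- by case: (brP (w j)).
- by case: (brP (w j)).
- apply: fmixed_type_mix => [i|]; first exact: regret_matching_ge0.
  exact: regret_matching_sum1 size_row_types_gt0 _.
have hk' : (size rs)%:R <= eta ^+ 2 * k%:R.
  by rewrite -ler_pdivrMl ?exprn_gt0 // mulrC ltW.
have := @regret_le R (size rs) size_row_types_gt0 adv adv01 k (index r rs) eta.
rewrite index_mem rin => /(_ isT eta0 hk'); apply: le_trans.
rewrite /round_payoff /adv nth_index //; apply: lerB => //.
by apply: ler_sum => j _; rewrite rowpay_type_mix.
Qed.

(* The error [e] is split evenly between the best replies, the bound on the
   lower value, and the average regret. *)
Lemma upper_le_of_row_types (c : R) : lower_le g A B c -> upper_le g A B c.
Proof.
move=> hc e e0; have e3 : 0 < e / 3 by rewrite divr_gt0.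
have [k [y [w [k0 By ybr wA hreg]]]] := regret_matching_dynamics e3 e3.
exists (avg_mix k (fun j => pure_mix (y j))).
  by apply: fmixed_avg => // j; exact: fmixed_pure.
move=> x Ax; have [r rin hr] := rsT.2 x Ax.
rewrite colpay_avg; under eq_bigr do rewrite colpay_pure hr //.
have best j : rowpay g (type_mix (w j)) (y j) <= c + e / 3 + e / 3.
  have [y' By' hy'] := hc _ (wA j) _ e3.
  by apply: le_trans (ybr j y' By') _; rewrite lerD2r.
have : \sum_(j < k) rowpay g (type_mix (w j)) (y j) <= \sum_(j < k) (c + e / 3 + e / 3).
  by apply: ler_sum => j _; exact: best.
rewrite sumr_const card_ord -mulr_natl.
have kp : 0 < (k%:R : R) by rewrite ltr0n.
have := hreg r rin; rewrite ler_pdivrMl //.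
have -> : k%:R * (c + e) = k%:R * (c + e / 3 + e / 3) + e / 3 * k%:R by field.
lra.
Qed.

Lemma lower_ge_of_row_types (c : R) : upper_ge g A B c -> lower_ge g A B c.
Proof.
move=> hc e e0; have e3 : 0 < e / 3 by rewrite divr_gt0.
have [k [y [w [k0 By ybr wA hreg]]]] := regret_matching_dynamics e3 e3.
exists (avg_mix k (fun j => type_mix (w j))); first exact: fmixed_avg.
move=> y0 By0; rewrite rowpay_avg.
have [x Ax] := hc _ (fmixed_avg k0 (fun j => fmixed_pure (By j))) _ e3.
have [r rin hr] := rsT.2 x Ax.
rewrite colpay_avg; under eq_bigr do rewrite colpay_pure hr //.
have best j : rowpay g (type_mix (w j)) (y j) - e / 3 <= rowpay g (type_mix (w j)) y0.
  by rewrite lerBlDr; exact: ybr.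
have : \sum_(j < k) (rowpay g (type_mix (w j)) (y j) - e / 3) <=
    \sum_(j < k) rowpay g (type_mix (w j)) y0.
  by apply: ler_sum => j _; exact: best.
rewrite sumrB sumr_const card_ord -mulr_natl.
have kp : 0 < (k%:R : R) by rewrite ltr0n.
have := hreg r rin; rewrite !ler_pdivlMl //.
have -> : k%:R * (c - e) = k%:R * (c - e / 3) - e / 3 * k%:R - k%:R * (e / 3) by field.
lra.
Qed.

End FiniteRowTypes.

Lemma row_types_of_signature (X Y : choiceType) (K : finType)
    (h : X -> Y -> bool) (A : set X) (B : set Y) (sig : X -> K)
    (H : K -> Y -> bool) (es : seq X) :
  A !=set0 -> (forall x y, x \notin es -> B y -> h x y = H (sig x) y) ->
  exists rs, row_types h A B rs.
Proof.
move=> [a0 Aa0] hH; pose P t := [set x | [/\ A x, x \notin es & sig x = t]].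
exists ([seq x <- es | `[< A x >]] ++ [seq xget a0 (P t) | t <- enum K]).
split=> [r|x Ax].
  rewrite mem_cat => /orP[|/mapP[t _ ->]].
    by rewrite mem_filter => /andP[/asboolP].
  by case: xgetP => [? _ []|].
have [xes|xes] := boolP (x \in es).
  exists x => //; rewrite mem_cat mem_filter xes andbT.
  by apply/orP; left; apply/asboolP.
have Px : P (sig x) x by [].
have [_ ges sig_x] := xgetI a0 Px.
exists (xget a0 (P (sig x))).
  by rewrite mem_cat; apply/orP; right; apply/mapP; exists (sig x); rewrite ?mem_enum.
by move=> y By; rewrite !hH // sig_x.
Qed.

Lemma uniq_size_le (X : choiceType) (Z : set X) (N : nat) (zs : seq X) :
  (Z #<= `I_N)%card -> uniq zs -> (forall z, z \in zs -> Z z) -> (size zs <= N)%N.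
Proof.
move=> ZN uzs zsZ; have finZ : finite_set Z by apply/finite_set_leP; exists N.
apply: leq_trans (geq_card_fset_set ZN); apply: uniq_leq_size => // z zin.
by rewrite in_fset_set // inE; exact: zsZ.
Qed.

Lemma sumr_entries (R : pzSemiRingType) (X : eqType) (Es : nat -> seq X) x K :
  Es 0 = [::] -> (forall k, {subset Es k <= Es k.+1}) ->
  \sum_(k < K) ((x \notin Es k) && (x \in Es k.+1))%:R = (x \in Es K)%:R :> R.
Proof.
move=> E0 Esub; elim: K => [|K IH]; first by rewrite big_ord0 E0.
rewrite big_ord_recr /= IH; have [xK|xK] := boolP (x \in Es K).
  by rewrite (Esub _ _ xK) addr0.
by rewrite add0r.
Qed.

Lemma count_fresh_le (X : choiceType) (Es : nat -> seq X) (Z : set X)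
    (b : pred nat) (N K : nat) :
  (forall k, {subset Es k <= Es k.+1}) -> (Z #<= `I_N)%card ->
  (forall k, b k -> exists2 z, z \in Es k.+1 & z \notin Es k /\ Z z) ->
  (count b (iota 0 K) <= N)%N.
Proof.
move=> Esub ZN fresh.
have [->//|] := posnP (count b (iota 0 K)).
rewrite -has_count => /hasP[k0 _ /fresh[x0 _ _]].
have /choice[z zP] : forall k, exists z, b k -> [/\ z \in Es k.+1, z \notin Es k & Z z].
  move=> k; have [/fresh[z ? [? ?]]|_] := boolP (b k); first by exists z.
  by exists x0.
have mono k k' : (k <= k')%N -> {subset Es k <= Es k'}.
  move=> /subnK <-; elim: (k' - k)%N => [|m IH] // x /IH.
  by rewrite addSn; exact: Esub.
rewrite -size_filter -(size_map z); apply: uniq_size_le ZN _ _.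
  (* [z k] enters [Es] exactly at round [k]. *)
  rewrite map_inj_in_uniq ?filter_uniq ?iota_uniq // => k1 k2.
  rewrite !mem_filter => /andP[b1 _] /andP[b2 _] z12.
  have [in1 out1 _] := zP _ b1; have [in2 out2 _] := zP _ b2.
  case: (ltngtP k1 k2) => // lt.
    by move: out2; rewrite -z12 (mono _ _ lt _ in1).
  by move: out1; rewrite z12 (mono _ _ lt _ in2).
by move=> w /mapP[k]; rewrite mem_filter => /andP[bk _] ->; case: (zP _ bk).
Qed.

Lemma sumr_count (R : pzSemiRingType) (I : Type) (s : seq I) (b : pred I) :
  \sum_(i <- s) (b i)%:R = (count b s)%:R :> R.
Proof.
rewrite -natr_sum -sum1_count; congr (_ %:R).
by rewrite [RHS]big_mkcond; apply: eq_bigr => i _; case: (b i).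
Qed.

Section Truncation.
Variables (R : realType) (X Y : choiceType) (g : X -> Y -> bool).
Variables (A : set X) (B : set Y) (fs : seq Y).
Hypotheses (A0 : A !=set0) (B0 : B !=set0).

(* Outside the rows [es], both truncations depend on a row only through its
   entries in the exceptional columns [fs]. *)
Definition keep_ones (es : seq X) x y := g x y && ((x \in es) || (y \in fs)).
Definition fill_ones (es : seq X) x y := g x y || ((x \notin es) && (y \notin fs)).

Definition fs_signature x := map_tuple (g x) (in_tuple fs).

Lemma fs_signatureE x y : y \in fs -> nth false (fs_signature x) (index y fs) = g x y.
Proof. by move=> yfs; rewrite /= (nth_map y) ?index_mem ?nth_index. Qed.

Lemma upper_le_keep_ones es (c : R) : lower_le g A B c -> upper_le (keep_ones es) A B c.
Proof.
move=> hc; have [rs rsT] : exists rs, row_types (keep_ones es) A B rs.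
  apply: (row_types_of_signature (sig := fs_signature)
    (H := fun t y => (y \in fs) && nth false t (index y fs)) (es := es) A0).
  move=> x y xes _; rewrite /keep_ones (negbTE xes) /=.
  by have [yfs|_] := boolP (y \in fs); rewrite ?andbF // fs_signatureE ?andbT.
have [a0 Aa0] := A0; apply: (upper_le_of_row_types rsT Aa0 B0).
by apply: lower_le_mono hc => x y _ _ /andP[].
Qed.

Lemma lower_ge_fill_ones es (c : R) : upper_ge g A B c -> lower_ge (fill_ones es) A B c.
Proof.
move=> hc; have [rs rsT] : exists rs, row_types (fill_ones es) A B rs.
  apply: (row_types_of_signature (sig := fs_signature)
    (H := fun t y => (y \notin fs) || nth false t (index y fs)) (es := es) A0).
  move=> x y xes _; rewrite /fill_ones xes /=.
  by have [yfs|_] := boolP (y \in fs); rewrite ?orbT // fs_signatureE ?orbF.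
have [a0 Aa0] := A0; apply: (lower_ge_of_row_types rsT Aa0 B0).
by apply: upper_ge_mono hc => x y _ _ gxy; rewrite /fill_ones gxy.
Qed.

Lemma colpay_keep_ones es x (ys : seq (R * Y)) :
  x \in es \/ (forall y, y \in map snd ys -> y \notin fs -> ~~ g x y) ->
  colpay (keep_ones es) x ys = colpay g x ys.
Proof.
move=> h; rewrite /colpay !big_seq; apply: eq_bigr => p pin; congr (_ * _%:R).
rewrite /keep_ones; case: h => [->|h]; first by rewrite andbT.
have [pfs|pfs] := boolP (p.2 \in fs); first by rewrite orbT andbT.
by rewrite (negbTE (h _ (map_f snd pin) pfs)).
Qed.

Lemma rowpay_fill_ones es (xs : seq (R * X)) y :
  y \in fs \/ (forall x, x \in map snd xs -> x \notin es -> g x y) ->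
  rowpay (fill_ones es) xs y = rowpay g xs y.
Proof.
move=> h; rewrite /rowpay !big_seq; apply: eq_bigr => p pin; congr (_ * _%:R).
rewrite /fill_ones; case: h => [->|h]; first by rewrite andbF orbF.
have [pes|pes] := boolP (p.2 \in es); first by rewrite orbF.
by rewrite (h _ (map_f snd pin) pes).
Qed.

Lemma colpay_le_keep_ones es (ones : Y -> seq X) x (ys : seq (R * Y)) :
  fmixed B ys -> (forall y, B y -> y \notin fs -> g x y -> x \in ones y) ->
  colpay g x ys <= colpay (keep_ones es) x ys +
    ((x \notin es) && (x \in es ++ flatten [seq ones p.2 | p <- ys]))%:R.
Proof.
move=> ysB onesP; have [xes|xes] := boolP (x \in es).
  by rewrite colpay_keep_ones ?addr0 //; left.
have [new|old] /= := boolP (x \in _ ++ _).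
  by have := colpay_ge0 (keep_ones es) x ysB; have := colpay_le1 g x ysB; lra.
rewrite colpay_keep_ones ?addr0 //; right => y /mapP[p pin ->] pfs.
apply: contra old => gxp; rewrite mem_cat; apply/orP; right; apply/flattenP.
exists (ones p.2); first exact: map_f.
by apply: onesP => //; case: ysB => /(_ p pin)[].
Qed.

Lemma rowpay_ge_fill_ones es y (xs : seq (R * X)) : fmixed A xs ->
  rowpay (fill_ones es) xs y -
    ((y \notin fs) && has (fun x => (x \notin es) && ~~ g x y) (map snd xs))%:R
  <= rowpay g xs y.
Proof.
move=> xsA; have [spoiled|fair] /= := boolP (_ && _).
  by have := rowpay_ge0 g y xsA; have := rowpay_le1 (fill_ones es) y xsA; lra.
rewrite subr0 rowpay_fill_ones //.
have [yfs|yfs] := boolP (y \in fs); [by left | right => x xin xes].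
apply: contraNT fair => gxy; rewrite yfs /=.
by apply/hasP; exists x => //; rewrite xes gxy.
Qed.

(* Each round [k] truncates to the rows [Es k] found so far; the next round adds
   every row with a 1 in a non-exceptional column used by the current strategy,
   so a row is treated unfairly only in the round in which it is added. *)
Lemma upper_le_sparse_cols (c : R) :
  (forall y, B y -> y \notin fs -> finite_set [set x | A x /\ g x y]) ->
  lower_le g A B c -> upper_le g A B c.
Proof.
move=> fin hc e e0; have e2 : 0 < e / 2 by rewrite divr_gt0.
have /choice [ones onesP] : forall y, exists l : seq X,
    B y -> y \notin fs -> forall x, A x -> g x y -> x \in l.
  move=> y; have [[By yfs]|] := pselect (B y /\ y \notin fs); last first.
    by move=> nB; exists [::] => By yfs; case: nB.
  have /finite_seqP[l hl] := fin y By yfs; exists l => _ _ x Ax gxy.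
  by have : [set x | A x /\ g x y] x by []; rewrite hl.
have /choice [step stepP] : forall es, exists ys,
    fmixed B ys /\ forall x, A x -> colpay (keep_ones es) x ys <= c + e / 2.
  by move=> es; have [ys ? ?] := upper_le_keep_ones es hc e2; exists ys.
pose Es k := iter k (fun es => es ++ flatten [seq ones p.2 | p <- step es]) [::].
have [K K0 hK] := exists_nat_gt (2 / e).
exists (avg_mix K (fun k => step (Es k))).
  by apply: fmixed_avg => // k; case: (stepP (Es k)).
move=> x Ax; rewrite colpay_avg.
have round k : colpay g x (step (Es k)) <=
    c + e / 2 + ((x \notin Es k) && (x \in Es k.+1))%:R.
  have [ysB ysc] := stepP (Es k).
  have onesx y By yfs : g x y -> x \in ones y := onesP y By yfs x Ax.
  apply: le_trans (colpay_le_keep_ones (Es k) ysB onesx) _.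
  by rewrite lerD2r ysc.
have : \sum_(k < K) colpay g x (step (Es k)) <= K%:R * (c + e / 2) + 1.
  apply: le_trans (_ : _ <= \sum_(k < K) (c + e / 2 +
    ((x \notin Es k) && (x \in Es k.+1))%:R)) _; first by apply: ler_sum => k _.
  rewrite big_split sumr_entries // => [|k y yk]; last by rewrite /= mem_cat yk.
  by rewrite sumr_const card_ord mulr_natl lerD2l lern1 leq_b1.
have Kp : 0 < (K%:R : R) by rewrite ltr0n.
rewrite mulrC ltr_pdivrMl // in hK.
rewrite ler_pdivrMl //; nra.
Qed.

(* Dually, each round adds the support of the current row strategy; a round is
   spoiled for a non-exceptional column [y] only when the support contains a new
   row with a 0 in [y], which happens at most [N] times. *)
Lemma lower_ge_dense_cols N (c : R) :
  (forall y, B y -> y \notin fs -> [set x | A x /\ g x y = false] #<= `I_N)%card ->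
  upper_ge g A B c -> lower_ge g A B c.
Proof.
move=> few hc e e0; have e2 : 0 < e / 2 by rewrite divr_gt0.
have /choice [step stepP] : forall es, exists xs,
    fmixed A xs /\ forall y, B y -> c - e / 2 <= rowpay (fill_ones es) xs y.
  by move=> es; have [xs ? ?] := lower_ge_fill_ones es hc e2; exists xs.
pose Es k := iter k (fun es => es ++ map snd (step es)) [::].
have [K K0 hK] := exists_nat_gt (2 * N%:R / e).
exists (avg_mix K (fun k => step (Es k))).
  by apply: fmixed_avg => // k; case: (stepP (Es k)).
move=> y By; rewrite rowpay_avg.
pose spoiled k :=
  (y \notin fs) && has (fun x => (x \notin Es k) && ~~ g x y) (map snd (step (Es k))).
have round k : c - e / 2 - (spoiled k)%:R <= rowpay g (step (Es k)) y.
  have [xsA xsc] := stepP (Es k).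
  by apply: le_trans (rowpay_ge_fill_ones (Es k) y xsA); rewrite lerB // xsc.
have nspoiled : (count spoiled (iota 0 K) <= N)%N.
  have [yfs|yfs] := boolP (y \in fs).
    by rewrite (eq_count (a2 := pred0)) ?count_pred0 // => k; rewrite /spoiled yfs.
  apply: (count_fresh_le (Es := Es) K _ (few y By yfs)) => [k x xk|k].
    by rewrite /= mem_cat xk.
  move=> /andP[_ /hasP[x xin /andP[xk gx]]].
  exists x; first by rewrite /= mem_cat xin orbT.
  split=> //; split; last exact: negbTE.
  by have [[xs0 _] _] := stepP (Es k); case/mapP: xin => p pin ->; case: (xs0 p pin).
have : K%:R * (c - e / 2) - N%:R <= \sum_(k < K) rowpay g (step (Es k)) y.
  apply: (@le_trans _ _ (\sum_(k < K) (c - e / 2 - (spoiled k)%:R))); last first.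
    by apply: ler_sum => k _.
  rewrite sumrB sumr_const card_ord mulr_natl lerB //.
  have -> : \sum_(k < K) (spoiled k)%:R = \sum_(k <- iota 0 K) (spoiled k)%:R :> R.
    by rewrite [in RHS](_ : iota 0 K = index_iota 0 K) ?big_mkord // /index_iota subn0.
  by rewrite sumr_count ler_nat.
have Kp : 0 < (K%:R : R) by rewrite ltr0n.
rewrite mulrC ltr_pdivrMl ?mulr_gt0 // in hK.
rewrite ler_pdivlMl //; nra.
Qed.

End Truncation.

Section Duality.
Variables (R : realFieldType) (X Y : eqType) (g : X -> Y -> bool).
Variables (A : set X) (B : set Y).

Definition dual_game y x := ~~ g x y.

Lemma rowpay_dual (ys : seq (R * Y)) x :
  weight ys = 1 -> rowpay dual_game ys x = 1 - colpay g x ys.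
Proof.
move=> <-; rewrite /rowpay /colpay /weight -sumrB; apply: eq_bigr => p _.
by rewrite /dual_game; case: (g x p.2); rewrite ?mulr0 ?mulr1 ?subr0 ?subrr.
Qed.

Lemma colpay_dual (xs : seq (R * X)) y :
  weight xs = 1 -> colpay dual_game y xs = 1 - rowpay g xs y.
Proof.
move=> <-; rewrite /rowpay /colpay /weight -sumrB; apply: eq_bigr => p _.
by rewrite /dual_game; case: (g p.2 y); rewrite ?mulr0 ?mulr1 ?subr0 ?subrr.
Qed.

Lemma dual_upper_ge (c : R) : lower_le g A B c -> upper_ge dual_game B A (1 - c).
Proof.
move=> hc xs [xsA w1] d d0; have [y By hy] := hc xs (conj xsA w1) d d0.
by exists y => //; rewrite colpay_dual //; lra.
Qed.

Lemma dual_lower_le (c : R) : upper_ge g A B c -> lower_le dual_game B A (1 - c).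
Proof.
move=> hc ys [ysB w1] d d0; have [x Ax hx] := hc ys (conj ysB w1) d d0.
by exists x => //; rewrite rowpay_dual //; lra.
Qed.

Lemma upper_le_of_dual (c : R) : lower_ge dual_game B A c -> upper_le g A B (1 - c).
Proof.
move=> hc e e0; have [ys [ysB w1] hys] := hc e e0.
by exists ys => // x Ax; have := hys x Ax; rewrite rowpay_dual //; lra.
Qed.

Lemma lower_ge_of_dual (c : R) : upper_le dual_game B A c -> lower_ge g A B (1 - c).
Proof.
move=> hc e e0; have [xs [xsA w1] hxs] := hc e e0.
by exists xs => // y By; have := hxs y By; rewrite colpay_dual //; lra.
Qed.

End Duality.

Section DenseAndSparseRows.
Variables (R : realType) (X Y : choiceType) (g : X -> Y -> bool).
Variables (A : set X) (B : set Y) (es : seq X).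
Hypotheses (A0 : A !=set0) (B0 : B !=set0).

Lemma lower_ge_dense_rows (c : R) :
  (forall x, A x -> x \notin es -> finite_set [set y | B y /\ g x y = false]) ->
  upper_ge g A B c -> lower_ge g A B c.
Proof.
move=> fin hc; rewrite -[c](subKr 1); apply: lower_ge_of_dual.
apply: (upper_le_sparse_cols (fs := es) B0 A0 _ (dual_lower_le hc)) => x Ax xes.
by apply: sub_finite_set (fin x Ax xes) => y [By /negbTE].
Qed.

Lemma upper_le_sparse_rows N (c : R) :
  (forall x, A x -> x \notin es -> [set y | B y /\ g x y] #<= `I_N)%card ->
  lower_le g A B c -> upper_le g A B c.
Proof.
move=> few hc; rewrite -[c](subKr 1); apply: upper_le_of_dual.
apply: (lower_ge_dense_cols (fs := es) B0 A0 _ (dual_upper_ge hc)) => x Ax xes.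
by apply: card_le_trans (few x Ax xes); apply: subset_card_le => y [By /negbFE].
Qed.

End DenseAndSparseRows.

Section Esum.
Variable R : realType.
Local Open Scope ereal_scope.

Lemma esumZl (Z : choiceType) (I : set Z) (r : R) (a : Z -> \bar R) :
  (0 <= r)%R -> (forall z, 0 <= a z) ->
  \esum_(i in I) (r%:E * a i) = r%:E * \esum_(i in I) a i.
Proof.
move=> r0 a0; rewrite /esum -ereal_supZl //; last first.
  by apply/set0P; exists 0; exists set0; [exact: fsets_set0 | rewrite fsbig_set0].
congr ereal_sup; apply/seteqP; split => x /=.
  move=> [F [finF FI] <-]; exists (\sum_(i \in F) a i); first by exists F.
  by rewrite !fsbig_finite // ge0_sume_distrr.
move=> [y [F [finF FI] <-] <-]; exists F => //.
by rewrite !fsbig_finite // ge0_sume_distrr.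
Qed.

Definition mix_density (Z : eqType) (zs : seq (R * Z)) (z : Z) : R :=
  (\sum_(p <- zs) p.1 * (p.2 == z)%:R)%R.

Lemma esum_mix_density (Z : choiceType) (zs : seq (R * Z)) (h : Z -> R) :
  (forall p, p \in zs -> 0 <= p.1)%R -> (forall z, 0 <= h z)%R ->
  \esum_(z in [set: Z]) (mix_density zs z * h z)%:E = (\sum_(p <- zs) p.1 * h p.2)%:E.
Proof.
move=> zs0 h0.
have -> : (fun z => (mix_density zs z * h z)%:E) =
    (fun z => \sum_(p <- zs | p \in zs) (p.1 * (p.2 == z)%:R * h z)%:E).
  by apply: funext => z; rewrite -big_seq sumEFin /mix_density mulr_suml.
rewrite esum_sum => [|z p _ pin]; last by rewrite lee_fin !mulr_ge0 ?zs0.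
rewrite -sumEFin [in RHS]big_seq; apply: eq_bigr => p pin.
rewrite (_ : (fun z => _) = (fun z => if z \in [set p.2] then (p.1 * h z)%:E else 0)).
  by rewrite -esum_mkcond esum_set1 // lee_fin mulr_ge0 // ?zs0.
apply: funext => z; have [<-|ne] := eqVneq p.2 z; first by rewrite mulr1 mem_set.
by rewrite memNset ?mulr0 ?mul0r // => /= ez; move/eqP: ne; rewrite ez.
Qed.

Lemma is_mixed_mix_density (Z : choiceType) (C : set Z) (zs : seq (R * Z)) :
  fmixed C zs -> is_mixed C (mix_density zs).
Proof.
move=> [zsC w1].
have supp z : mix_density zs z != 0%R -> z \in map snd zs.
  apply: contraNT => zs'; rewrite /mix_density big_seq big1 // => p pin.
  by have [ez|] := eqVneq p.2 z; [case/negP: zs'; rewrite -ez map_f | rewrite mulr0].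
split.
- move=> z; rewrite /mix_density big_seq; apply: sumr_ge0 => p pin.
  by rewrite mulr_ge0 ?ler0n //; case: (zsC p pin).
- by move=> z /supp /mapP[p pin ->]; case: (zsC p pin).
- apply/finite_set_countable/(sub_finite_set _ (finite_seq (map snd zs))).
  by move=> z /= /supp.
- under eq_esum do rewrite -[mix_density _ _]mulr1.
  rewrite esum_mix_density // => [|p pin]; last by case: (zsC p pin).
  by under eq_bigr do rewrite mulr1; rewrite -/(weight zs) w1.
Qed.

Lemma exists_mixed (Z : choiceType) (C : set Z) :
  C !=set0 -> exists p : Z -> R, is_mixed C p.
Proof.
by move=> [z Cz]; exists (mix_density (pure_mix z)); exact/is_mixed_mix_density/fmixed_pure.
Qed.

Lemma esum_mixed_le (Z : choiceType) (C : set Z) (p : Z -> R) (f : Z -> \bar R) (c : R) :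
  is_mixed C p -> (forall z, 0 <= f z) -> (forall z, C z -> f z <= c%:E) -> (0 <= c)%R ->
  \esum_(z in [set: Z]) ((p z)%:E * f z) <= c%:E.
Proof.
move=> [p0 pC _ p1] f0 fc c0.
apply: (@le_trans _ _ (\esum_(z in [set: Z]) (c%:E * (p z)%:E))).
  apply: le_esum => z _; have [->|nz] := eqVneq (p z) 0%R; first by rewrite mul0e mule0.
  rewrite [leRHS]muleC lee_wpmul2l ?lee_fin //; exact/fc/pC.
by rewrite esumZl // ?p1 ?mule1 // => z; rewrite lee_fin.
Qed.

Lemma esum_mixed_ge (Z : choiceType) (C : set Z) (p : Z -> R) (f : Z -> \bar R) (c : R) :
  is_mixed C p -> (forall z, 0 <= f z) -> (forall z, C z -> c%:E <= f z) ->
  c%:E <= \esum_(z in [set: Z]) ((p z)%:E * f z).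
Proof.
move=> [p0 pC _ p1] f0 fc; have [c0|c0] := leP c 0%R.
  apply: le_trans (_ : 0 <= _); first by rewrite lee_fin.
  by apply: esum_ge0 => z _; rewrite mule_ge0 ?lee_fin.
apply: (@le_trans _ _ (\esum_(z in [set: Z]) (c%:E * (p z)%:E))).
  by rewrite esumZl ?p1 ?mule1 ?(ltW c0) // => z; rewrite lee_fin.
apply: le_esum => z _; have [->|nz] := eqVneq (p z) 0%R; first by rewrite mul0e mule0.
rewrite [leLHS]muleC lee_wpmul2l ?lee_fin //; exact/fc/pC.
Qed.

Variables (S T : choiceType) (pi : S -> T -> bool).

Lemma mixpay_by_rows (p : S -> R) (q : T -> R) :
  (forall s, 0 <= p s)%R -> (forall t, 0 <= q t)%R ->
  mixpay pi p q = \esum_(s in [set: S])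
    ((p s)%:E * \esum_(t in [set: T]) (q t * (pi s t)%:R)%:E).
Proof.
move=> p0 q0; rewrite /mixpay (_ : [set: S * T] = [set: S] `*`` fun=> [set: T]).
  rewrite -(esum_esum (a := fun s t => (p s * q t * (pi s t)%:R)%:E)) => [|s t _ _].
    apply: eq_esum => s _; rewrite -esumZl => [|//|t]; last by rewrite lee_fin mulr_ge0.
    by apply: eq_esum => t _; rewrite -EFinM mulrA.
  by rewrite lee_fin !mulr_ge0.
by apply/seteqP; split => -[].
Qed.

Lemma mixpay_by_cols (p : S -> R) (q : T -> R) :
  (forall s, 0 <= p s)%R -> (forall t, 0 <= q t)%R ->
  mixpay pi p q = \esum_(t in [set: T])
    ((q t)%:E * \esum_(s in [set: S]) (p s * (pi s t)%:R)%:E).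
Proof.
move=> p0 q0; rewrite /mixpay.
rewrite (reindex_esum [set: T * S] [set: S * T] (fun ts => (ts.2, ts.1))).
  rewrite (_ : [set: T * S] = [set: T] `*`` fun=> [set: S]); last first.
    by apply/seteqP; split => -[].
  rewrite -(esum_esum (a := fun t s => (p s * q t * (pi s t)%:R)%:E)) => [|t s _ _].
    apply: eq_esum => t _; rewrite -esumZl => [|//|s]; last by rewrite lee_fin mulr_ge0.
    by apply: eq_esum => s _ /=; rewrite -EFinM mulrCA mulrA.
  by rewrite lee_fin !mulr_ge0.
split=> [//|[t1 s1] [t2 s2] _ _ [-> ->] //|[s t] _]; by exists (t, s).
Qed.

End Esum.

Lemma finite_exceptions (T : choiceType) (P : T -> Prop) :
  finite_set [set t | ~ P t] -> exists ts : seq T, forall t, t \notin ts -> P t.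
Proof.
move=> /finite_seqP[ts hts]; exists ts => t tts; apply: contrapT => nPt.
by move/negP: tts; apply; have : [set t | ~ P t] t by []; rewrite hts.
Qed.

Section Values.
Variables (R : realType) (S T : choiceType) (pi : S -> T -> bool).
Variables (A : set S) (B : set T).
Hypotheses (A0 : A !=set0) (B0 : B !=set0).
Local Open Scope ereal_scope.

Let MA := [set p : S -> R | is_mixed A p].
Let MB := [set q : T -> R | is_mixed B q].
Definition lower_value :=
  ereal_sup [set ereal_inf [set mixpay pi p q | q in MB] | p in MA].
Definition upper_value :=
  ereal_inf [set ereal_sup [set mixpay pi p q | p in MA] | q in MB].

Lemma mixpay_ge0 (p : S -> R) (q : T -> R) :
  is_mixed A p -> is_mixed B q -> 0 <= mixpay pi p q.
Proof.
move=> [p0 _ _ _] [q0 _ _ _]; apply: esum_ge0 => st _.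
by rewrite lee_fin !mulr_ge0.
Qed.

Lemma mixpay_le1 (p : S -> R) (q : T -> R) :
  is_mixed A p -> is_mixed B q -> mixpay pi p q <= 1.
Proof.
move=> mp mq; have [p0 _ _ _] := mp; have [q0 _ _ _] := mq.
rewrite mixpay_by_rows //; apply: (esum_mixed_le mp) => // [s|s _].
  by apply: esum_ge0 => t _; rewrite lee_fin mulr_ge0.
under eq_esum do rewrite EFinM.
by apply: (esum_mixed_le mq) => // t _; rewrite lee_fin lern1 leq_b1.
Qed.

Lemma lower_value_le_upper : lower_value <= upper_value.
Proof.
apply: ge_ereal_sup => _ [p mp <-]; apply: le_ereal_inf_tmp => _ [q mq <-].
apply: (@le_trans _ _ (mixpay pi p q)).
  by apply: ereal_inf_lbound; exists q.
by apply: ereal_sup_ubound; exists p.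
Qed.

Lemma lower_value_ge0 : 0 <= lower_value.
Proof.
have [p mp] := exists_mixed R A0.
apply: le_trans (ereal_sup_ubound _); last by exists p.
by apply: le_ereal_inf_tmp => _ [q mq <-]; exact: mixpay_ge0.
Qed.

Lemma upper_value_le1 : upper_value <= 1.
Proof.
have [q mq] := exists_mixed R B0.
apply: le_trans (ereal_inf_lbound _) _; first by exists q.
by apply: ge_ereal_sup => _ [p mp <-]; exact: mixpay_le1.
Qed.

Lemma lower_value_fin : (fine lower_value)%:E = lower_value.
Proof.
apply: fineK; rewrite ge0_fin_numE ?lower_value_ge0 //.
by apply: le_lt_trans lower_value_le_upper (le_lt_trans upper_value_le1 (ltey _)).
Qed.

Lemma upper_value_fin : (fine upper_value)%:E = upper_value.
Proof.
apply: fineK; rewrite ge0_fin_numE; last first.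
  exact: le_trans lower_value_ge0 lower_value_le_upper.
exact: le_lt_trans upper_value_le1 (ltey _).
Qed.

Lemma esum_rowpay (xs : seq (R * S)) t : fmixed A xs ->
  \esum_(s in [set: S]) (mix_density xs s * (pi s t)%:R)%:E = (rowpay pi xs t)%:E.
Proof. by move=> [xsA _]; rewrite esum_mix_density // => p /xsA[]. Qed.

Lemma esum_colpay (ys : seq (R * T)) s : fmixed B ys ->
  \esum_(t in [set: T]) (mix_density ys t * (pi s t)%:R)%:E = (colpay pi s ys)%:E.
Proof. by move=> [ysB _]; rewrite esum_mix_density // => p /ysB[]. Qed.

Lemma lower_le_lower_value : lower_le pi A B (fine lower_value).
Proof.
move=> xs xsA d d0; have mp := is_mixed_mix_density xsA.
have inf_le : ereal_inf [set mixpay pi (mix_density xs) q | q in MB] <= lower_value.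
  by apply: ereal_sup_ubound; exists (mix_density xs).
have : ereal_inf [set mixpay pi (mix_density xs) q | q in MB] < (fine lower_value + d)%:E.
  by apply: le_lt_trans inf_le _; rewrite -lower_value_fin lte_fin ltrDl.
move=> /ereal_inf_lt[_ [q mq <-]]; apply: contraPP => nB; apply/negP.
rewrite -leNgt; have [p0 _ _ _] := mp; have [q0 _ _ _] := mq.
rewrite mixpay_by_cols //; under eq_esum do rewrite esum_rowpay //.
apply: (esum_mixed_ge mq) => [t|t Bt]; first by rewrite lee_fin (rowpay_ge0 _ _ xsA).
by rewrite lee_fin ltW // ltNge; apply/negP => ht; apply: nB; exists t.
Qed.

Lemma upper_ge_upper_value : upper_ge pi A B (fine upper_value).
Proof.
move=> ys ysB d d0; have mq := is_mixed_mix_density ysB.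
have le_sup : upper_value <= ereal_sup [set mixpay pi p (mix_density ys) | p in MA].
  by apply: ereal_inf_lbound; exists (mix_density ys).
have : (fine upper_value - d)%:E < ereal_sup [set mixpay pi p (mix_density ys) | p in MA].
  by apply: lt_le_trans le_sup; rewrite -upper_value_fin lte_fin ltrBlDr ltrDl.
move=> /ereal_sup_gt[_ [p mp <-]]; apply: contraPP => nA; apply/negP.
rewrite -leNgt; have [p0 _ _ _] := mp; have [q0 _ _ _] := mq.
rewrite mixpay_by_rows //; under eq_esum do rewrite esum_colpay //.
have ltA s : A s -> (colpay pi s ys < fine upper_value - d)%R.
  by move=> As; rewrite ltNge; apply/negP => hs; apply: nA; exists s.
apply: (esum_mixed_le mp) => [s|s As|]; first by rewrite lee_fin (colpay_ge0 _ _ ysB).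
  by rewrite lee_fin ltW // ltA.
by have [a Aa] := A0; apply: le_trans (colpay_ge0 pi a ysB) (ltW (ltA a Aa)).
Qed.

Lemma upper_value_le c : upper_le pi A B c -> upper_value <= c%:E.
Proof.
move=> hc; apply/lee_addgt0Pr => e e0; have [ys ysB hys] := hc e e0.
have mq := is_mixed_mix_density ysB.
apply: le_trans (ereal_inf_lbound _) _; first by exists (mix_density ys).
apply: ge_ereal_sup => _ [p mp <-]; have [p0 _ _ _] := mp; have [q0 _ _ _] := mq.
rewrite mixpay_by_rows // -EFinD; under eq_esum do rewrite esum_colpay //.
apply: (esum_mixed_le mp) => [s|s As|]; first by rewrite lee_fin (colpay_ge0 _ _ ysB).
  by rewrite lee_fin hys.
by have [a Aa] := A0; apply: le_trans (hys a Aa); exact: colpay_ge0 ysB.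
Qed.

Lemma lower_value_ge c : lower_ge pi A B c -> c%:E <= lower_value.
Proof.
move=> hc; apply/lee_subgt0Pr => e e0; have [xs xsA hxs] := hc e e0.
have mp := is_mixed_mix_density xsA.
apply: le_trans (ereal_sup_ubound _); last by exists (mix_density xs).
apply: le_ereal_inf_tmp => _ [q mq <-]; have [p0 _ _ _] := mp; have [q0 _ _ _] := mq.
rewrite mixpay_by_cols // -EFinB; under eq_esum do rewrite esum_rowpay //.
apply: (esum_mixed_ge mq) => [t|t Bt]; first by rewrite lee_fin (rowpay_ge0 _ _ xsA).
by rewrite lee_fin hxs.
Qed.

Lemma minimax_of_upper_le : upper_le pi A B (fine lower_value) -> minimax_on R pi A B.
Proof.
move=> hc; rewrite /minimax_on -/lower_value -/upper_value.
apply/eqP; rewrite eq_le lower_value_le_upper /=.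
by rewrite -lower_value_fin; exact: upper_value_le.
Qed.

Lemma minimax_of_lower_ge : lower_ge pi A B (fine upper_value) -> minimax_on R pi A B.
Proof.
move=> hc; rewrite /minimax_on -/lower_value -/upper_value.
apply/eqP; rewrite eq_le lower_value_le_upper /=.
by rewrite -upper_value_fin; exact: lower_value_ge.
Qed.

Lemma minimax_dense_rows :
  finite_set [set s | ~ finite_set [set t | pi s t = false]] -> minimax_on R pi A B.
Proof.
move=> /finite_exceptions[es esP]; apply: minimax_of_lower_ge.
apply: (lower_ge_dense_rows (es := es) A0 B0 _ upper_ge_upper_value) => s _ /esP.
by apply: sub_finite_set => t [].
Qed.

Lemma minimax_sparse_rows N :
  finite_set [set s | ~ ([set t | pi s t = true] #<= `I_N)%card] -> minimax_on R pi A B.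
Proof.
move=> /finite_exceptions[es esP]; apply: minimax_of_upper_le.
apply: (upper_le_sparse_rows (es := es) A0 B0 _ lower_le_lower_value) => s _ /esP.
by apply: card_le_trans; apply: subset_card_le => t [].
Qed.

Lemma minimax_dense_cols N :
  finite_set [set t | ~ ([set s | pi s t = false] #<= `I_N)%card] -> minimax_on R pi A B.
Proof.
move=> /finite_exceptions[fs fsP]; apply: minimax_of_lower_ge.
apply: (lower_ge_dense_cols (fs := fs) A0 B0 _ upper_ge_upper_value) => t _ /fsP.
by apply: card_le_trans; apply: subset_card_le => s [].
Qed.

Lemma minimax_sparse_cols :
  finite_set [set t | ~ finite_set [set s | pi s t = true]] -> minimax_on R pi A B.
Proof.
move=> /finite_exceptions[fs fsP]; apply: minimax_of_upper_le.
apply: (upper_le_sparse_cols (fs := fs) A0 B0 _ lower_le_lower_value) => t _ /fsP.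
by apply: sub_finite_set => s [].
Qed.

End Values.

Unset Implicit Arguments.
Local Open Scope card_scope.

Theorem corollary3p2 (R : realType) (S T : choiceType) (pi : S -> T -> bool) :
  [set: S] !=set0 -> [set: T] !=set0 ->
  (   (* (1) all but finitely many rows contain finitely many 0 entries *)
      finite_set [set s | ~ finite_set [set t | pi s t = false]]
      (* (2) all but finitely many rows contain at most N entries equal to 1 *)
   \/ (exists N : nat, finite_set [set s | ~ ([set t | pi s t = true] #<= `I_N)])
      (* (3) all but finitely many columns contain at most N entries equal to 0 *)
   \/ (exists N : nat, finite_set [set t | ~ ([set s | pi s t = false] #<= `I_N)])
      (* (4) all but finitely many columns contain finitely many 1 entries *)
   \/ finite_set [set t | ~ finite_set [set s | pi s t = true]]) ->
  totally_minimax R pi.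
Proof.
move=> _ _ cases A B A0 B0.
case: cases => [|[[N]|[[N]|]]].
- exact: minimax_dense_rows.
- exact: minimax_sparse_rows.
- exact: minimax_dense_cols.
- exact: minimax_sparse_cols.
Qed.
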